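(* Let $\mathfrak{n}^{\mathbb{Q}}$ be a rational nilpotent Lie algebra of nilpotency class $c$ and $f$ an Anosov automorphism of $\mathfrak{n}^{\mathbb{Q}}$. Then $\min(\mathrm{sg}(f))\geq c$, i.e. $f$ has at least $c$ eigenvalues (with multiplicity) of absolute value $<1$ and at least $c$ eigenvalues of absolute value $>1$.
   Context: The lower central series is $\gamma_1(\mathfrak{n})=\mathfrak{n}$, $\gamma_i(\mathfrak{n})=[\mathfrak{n},\gamma_{i-1}(\mathfrak{n})]$; $\mathfrak{n}$ has nilpotency class $c$ if $\gamma_{c+1}(\mathfrak{n})=0\neq\gamma_c(\mathfrak{n})$. An automorphism of a rational Lie algebra is Anosov if it is hyperbolic (no eigenvalue of absolute value $1$) and integer-like (characteristic polynomial with integer coefficients and determinant $\pm1$). Its signature $\mathrm{sg}(f)$ is the set $\{p,q\}$ with $p$ the number of eigenvalues of absolute value $<1$ and $q$ the number of absolute value $>1$. *)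

From HB Require Import structures.
From mathcomp Require Import all_boot all_order all_algebra all_field.
Set Implicit Arguments. Unset Strict Implicit. Unset Printing Implicit Defensive.
Import Order.TTheory GRing.Theory Num.Theory.
Local Open Scope ring_scope.

(* A finite-dimensional rational Lie algebra of dimension n is Q^n
   (row vectors 'rV[rat]_n) equipped with a Lie bracket. *)
Definition is_lie_bracket (n : nat) (br : 'rV[rat]_n -> 'rV[rat]_n -> 'rV[rat]_n) : Prop :=
  [/\ (forall (a : rat) x y z, br (a *: x + y) z = a *: br x z + br y z),
      (forall (a : rat) x y z, br z (a *: x + y) = a *: br z x + br z y),
      (forall x, br x x = 0) &
      (forall x y z, br x (br y z) + br y (br z x) + br z (br x y) = 0)].

(* Lower central series: lcs br i is the subspace gamma_i (as a predicate),
   gamma_1 = n, gamma_{i+1} = span { [x, y] | y in gamma_i }.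
   (Index 0 is not used; it is just {0}.) *)
Inductive lcs (n : nat) (br : 'rV[rat]_n -> 'rV[rat]_n -> 'rV[rat]_n)
  : nat -> 'rV[rat]_n -> Prop :=
| lcs_top x : lcs br 1 x
| lcs_br i x y : lcs br i.+1 y -> lcs br i.+2 (br x y)
| lcs_zero i : lcs br i 0
| lcs_add i u v : lcs br i u -> lcs br i v -> lcs br i (u + v)
| lcs_scale i (a : rat) u : lcs br i u -> lcs br i (a *: u).

Definition nilpotency_class n (br : 'rV[rat]_n -> 'rV[rat]_n -> 'rV[rat]_n) (c : nat) : Prop :=
  (forall x, lcs br c.+1 x -> x = 0) /\ (exists x, lcs br c x /\ x != 0).

Definition is_lie_automorphism n (br : 'rV[rat]_n -> 'rV[rat]_n -> 'rV[rat]_n)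
  (f : 'M[rat]_n) : Prop :=
  f \in unitmx /\ (forall x y, br x y *m f = br (x *m f) (y *m f)).

Definition char_polyC n (f : 'M[rat]_n) : {poly algC} := char_poly (map_mx ratr f).

Definition hyperbolic n (f : 'M[rat]_n) : Prop :=
  forall z : algC, root (char_polyC f) z -> `|z| != 1.

Definition integer_like n (f : 'M[rat]_n) : Prop :=
  (forall i, (char_poly f)`_i \is a Num.int) /\ (\det f = 1 \/ \det f = -1).

Definition anosov n (f : 'M[rat]_n) : Prop := hyperbolic f /\ integer_like f.

From HB Require Import structures.
From mathcomp Require Import all_boot all_order all_algebra all_field.
From Stdlib Require Import Classical ClassicalEpsilon.
Set Implicit Arguments. Unset Strict Implicit. Unset Printing Implicit Defensive.
Import Order.TTheory GRing.Theory Num.Theory.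
Local Open Scope ring_scope.

(* The lower central series
     n = gamma_1 > gamma_2 > ... > gamma_c > gamma_(c+1) = 0
   is a flag of f-stable subspaces of Q^n, strictly decreasing up to index c
   (as soon as gamma_(j+1) = gamma_(j+2) the series stops decreasing).  Taking
   characteristic polynomials of f on the successive quotients of this flag
   yields c nonconstant monic rational polynomials whose product divides the
   characteristic polynomial chi of f.  Since chi is monic with integer
   coefficients and chi(0) = +-1, every monic rational divisor of chi has an
   integer constant coefficient (an algebraic integer that is rational), and
   so constant coefficient +-1.  Hence the roots of each such factor have
   product of absolute values 1; as none of them lies on the unit circle
   (hyperbolicity), each factor has a root inside and a root outside it.
   Counting roots factor by factor gives c eigenvalues of each kind. *)

Section CharPolyFactors.
Variable F : fieldType.

Lemma char_poly_conj n (P A : 'M[F]_n) : P \in unitmx ->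
  char_poly (P *m A *m invmx P) = char_poly A.
Proof.
move=> uP; rewrite /char_poly /char_poly_mx.
have PPinv : map_mx (@polyC F) P *m map_mx polyC (invmx P) = 1%:M.
  by rewrite -map_mxM mulmxV // map_mx1.
have -> : 'X%:M - map_mx polyC (P *m A *m invmx P) =
   map_mx polyC P *m ('X%:M - map_mx polyC A) *m map_mx polyC (invmx P).
  rewrite mulmxBr mulmxBl scalar_mxC -(mulmxA _ (map_mx polyC P)) PPinv mulmx1.
  by rewrite !map_mxM.
rewrite !det_mulmx mulrC mulrA -!det_mulmx.
by rewrite -map_mxM mulVmx // map_mx1 mul1mx.
Qed.

Lemma char_poly_lblock m s (A : 'M[F]_m) (X : 'M_(s, m)) (Y : 'M_s) :
  char_poly (block_mx A 0 X Y) = char_poly A * char_poly Y.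
Proof.
rewrite /char_poly /char_poly_mx map_block_mx /= map_mx0 scalar_mx_block.
by rewrite opp_block_mx add_block_mx oppr0 addr0 add0r det_lblock.
Qed.

(* If the rows of B span an f-stable subspace and B, C together form a basis,
   then in that basis f is block lower triangular, with upper-left block the
   restriction conjmx B f of f. *)
Lemma char_poly_stable_block r s n (e : n = (r + s)%N) (B : 'M[F]_(r, n))
  (C : 'M_(s, n)) (f : 'M_n) : row_full (col_mx B C) -> stablemx B f ->
  exists Y : 'M_s, char_poly f = char_poly (conjmx B f) * char_poly Y.
Proof.
subst n => fullP sB; set P := col_mx B C; set A1 := conjmx B f.
have uP : P \in unitmx by rewrite -row_full_unit.
set Z := C *m f *m invmx P; exists (rsubmx Z).
have A1B : A1 *m B = B *m f by rewrite /A1 /conjmx mulmxKpV.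
have ZP : Z *m P = C *m f by rewrite /Z mulmxKV.
have block : P *m f *m invmx P = block_mx A1 0 (lsubmx Z) (rsubmx Z).
  rewrite -[RHS](mulmxK uP); congr (_ *m _).
  rewrite /P mul_col_mx mul_block_col mul0mx addr0 A1B -mul_row_col hsubmxK.
  by rewrite -/P ZP.
by rewrite -(char_poly_conj f uP) block char_poly_lblock.
Qed.

Lemma char_poly_stable_factor p n (U : 'M[F]_(p, n)) (f : 'M_n) :
  stablemx U f ->
  exists q : {poly F}, [/\ q \is monic, size q = (n - \rank U).+1 &
     char_poly f = char_poly (conjmx (row_base U) f) * q].
Proof.
move=> sU.
have e : n = (\rank U + \rank (U^C)%MS)%N.
  by rewrite mxrank_compl subnKC ?rank_leq_col.
have full : row_full (col_mx (row_base U) (row_base (U^C)%MS)).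
  have full_sum : (1%:M <= U + U^C)%MS by rewrite sub1mx addsmx_compl_full.
  rewrite -sub1mx -addsmxE; apply: submx_trans full_sum _.
  by apply: addsmxS; rewrite eq_row_base.
have sB : stablemx (row_base U) f by rewrite stablemx_row_base.
have [Y ->] := char_poly_stable_block e full sB.
exists (char_poly Y); split => //; first exact: char_poly_monic.
by rewrite size_char_poly mxrank_compl.
Qed.

Definition monic_factor_seq (chi : {poly F}) (ps : seq {poly F}) :=
  [/\ all (fun q => q \is monic) ps, all (fun q : {poly F} => 1 < size q)%N ps &
      \prod_(q <- ps) q %| chi].

(* A flag V 0 >= V 1 >= ... of f-stable subspaces, starting from the whole
   space and with k strict drops V i > V (i+1) for i < k, yields k nonconstant
   monic factors of char_poly f: the characteristic polynomials of f on the
   quotients V i / V (i+1). *)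
Lemma stable_flag_factors (k : nat) :
  forall p n (f : 'M[F]_n) (V : nat -> 'M[F]_(p, n)),
  row_full (V 0%N) -> (forall i, stablemx (V i) f) ->
  (forall i, (V i.+1 <= V i)%MS) ->
  (forall i, (i < k)%N -> (\rank (V i.+1) < \rank (V i))%N) ->
  exists ps, size ps = k /\ monic_factor_seq (char_poly f) ps.
Proof.
elim: k => [|k IH] p n f V full stV decV dropV.
  by exists [::]; split; rewrite // /monic_factor_seq big_nil dvd1p.
have [q [monq sizeq ->]] := char_poly_stable_factor (stV 1%N).
set B := row_base (V 1%N); set A1 := conjmx B f.
pose W i := V i.+1 *m pinvmx B.
have V_sub i : (V i.+1 <= V 1%N)%MS.
  elim: i => [|i IHi]; [exact: submx_refl | exact: submx_trans (decV _) IHi].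
have WB i : W i *m B = V i.+1 by rewrite /W mulmxKpV // eq_row_base V_sub.
have rankW i : \rank (W i) = \rank (V i.+1).
  by rewrite -(WB i) mxrankMfree // row_base_free.
have fullW : row_full (W 0%N) by rewrite /row_full rankW.
have stW i : stablemx (W i) A1.
  have -> : W i *m A1 = (W i *m B) *m f *m pinvmx B by rewrite /A1 /conjmx !mulmxA.
  by rewrite WB; apply: submxMr; exact: stV.
have decW i : (W i.+1 <= W i)%MS by apply: submxMr; exact: decV.
have dropW i : (i < k)%N -> (\rank (W i.+1) < \rank (W i))%N.
  by move=> ik; rewrite !rankW; apply: dropV.
have [ps [sizeps [monps nconps dvdps]]] := IH _ _ A1 W fullW stW decW dropW.
exists (q :: ps); split; first by rewrite /= sizeps.
split => /=; [by rewrite monq monps | |].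
- rewrite nconps sizeq andbT ltnS subn_gt0.
  by have := dropV 0%N isT; rewrite (eqP full).
- by rewrite big_cons mulrC dvdp_mul.
Qed.

(* Every subspace of F^n, given as a predicate closed under linear
   combinations, is the row space of a matrix: take a maximal-rank matrix all
   of whose row combinations satisfy the predicate. *)
Lemma subspace_mx n (P : 'rV[F]_n -> Prop) : P 0 ->
  (forall u v, P u -> P v -> P (u + v)) -> (forall a u, P u -> P (a *: u)) ->
  exists M : 'M[F]_n, forall x, (x <= M)%MS <-> P x.
Proof.
move=> P0 PD PZ.
pose inside (M : 'M[F]_n) := forall y, (y <= M)%MS -> P y.
pose reached r : bool :=
  excluded_middle_informative (exists M, inside M /\ \rank M = r).
have reached0 : exists r, reached r.
  exists 0%N; apply/sumboolP; exists 0; split; last exact: mxrank0.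
  by move=> y; rewrite submx0 => /eqP ->.
have reached_le r : reached r -> (r <= n)%N.
  by move=> /sumboolP [M [_ <-]]; exact: rank_leq_col.
case: (ex_maxnP reached0 reached_le) => _ /sumboolP [M [inM <-]] maxM.
exists M => x; split; first exact: inM.
move=> Px; apply/idPn => xM.
have inMx : inside (M + x)%MS.
  move=> y /sub_addsmxP [u ->]; apply: PD; first exact/inM/submxMl.
  by rewrite [u.2]mx11_scalar mul_scalar_mx; apply: PZ.
have : (M < M + x)%MS by rewrite ltmxE addsmxSl addsmx_sub submx_refl.
rewrite ltmxErank => /andP [_]; rewrite ltnNge maxM //.
by apply/sumboolP; exists (M + x)%MS.
Qed.

End CharPolyFactors.

Section LowerCentralSeries.
Variables (n : nat) (br : 'rV[rat]_n -> 'rV[rat]_n -> 'rV[rat]_n).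

Lemma lcs_pred m x : lcs br m x -> (1 < m)%N -> lcs br m.-1 x.
Proof.
elim=> [//|[|i] y z _ IH|i|i u v _ IHu _ IHv|i a u _ IHu] lt1m.
- exact: lcs_top.
- by apply: lcs_br; apply: IH.
- exact: lcs_zero.
- by apply: lcs_add; [apply: IHu | apply: IHv].
- by apply: lcs_scale; apply: IHu.
Qed.

Lemma lcs_aut (f : 'M[rat]_n) : (forall x y, br x y *m f = br (x *m f) (y *m f)) ->
  forall m x, lcs br m x -> lcs br m (x *m f).
Proof.
move=> hf m x; elim=> [y|i y z _ IH|i|i u v _ IHu _ IHv|i a u _ IHu].
- exact: lcs_top.
- by rewrite hf; apply: lcs_br.
- by rewrite mul0mx; apply: lcs_zero.
- by rewrite mulmxDl; apply: lcs_add.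
- by rewrite -scalemxAl; apply: lcs_scale.
Qed.

Lemma lcs_stabilizes i : (forall x, lcs br i.+1 x -> lcs br i.+2 x) ->
  forall x, lcs br i.+2 x -> lcs br i.+3 x.
Proof.
move=> hyp x; move Em: i.+2 => m Hx; elim: Hx Em.
- by [].
- by move=> j y z Hz _ [Ej]; subst j; apply: lcs_br; apply: hyp.
- by move=> j _; apply: lcs_zero.
- by move=> j u v _ IHu _ IHv Ej; apply: lcs_add; [apply: IHu | apply: IHv].
- by move=> j a u _ IHu Ej; apply: lcs_scale; apply: IHu.
Qed.

(* In class c the series strictly decreases from gamma_1 to gamma_(c+1):
   otherwise it would stabilise before reaching 0, contradicting gamma_c <> 0. *)
Lemma lcs_strict c : nilpotency_class br c -> forall j, (j < c)%N ->
  exists x, lcs br j.+1 x /\ ~ lcs br j.+2 x.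
Proof.
case=> gamma_c1_0 [x0 [gamma_c_x0 x0_neq0]] j lt_jc; apply: NNPP => no_gap.
have stuck : forall x, lcs br j.+1 x -> lcs br j.+2 x.
  by move=> x Hx; apply: NNPP => Hn; apply: no_gap; exists x.
have stuck_d d : forall x, lcs br (j + d).+1 x -> lcs br (j + d).+2 x.
  elim: d => [|d IHd]; first by rewrite addn0.
  by rewrite addnS; apply: lcs_stabilizes.
have Ec : c = (j + (c - j.+1)).+1 by rewrite -addSn subnKC.
move: gamma_c_x0; rewrite {1}Ec => /stuck_d; rewrite -Ec => /gamma_c1_0 x0_eq0.
by rewrite x0_eq0 eqxx in x0_neq0.
Qed.

Lemma lcs_mx : exists V : nat -> 'M[rat]_n,
  forall i x, (x <= V i)%MS <-> lcs br i.+1 x.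
Proof.
have hV i : exists M : 'M[rat]_n, forall x, (x <= M)%MS <-> lcs br i.+1 x.
  by apply: subspace_mx; [exact: lcs_zero | exact: lcs_add | exact: lcs_scale].
exists (fun i => sval (constructive_indefinite_description _ (hV i))) => i.
exact: svalP (constructive_indefinite_description _ (hV i)).
Qed.

Lemma nilpotent_aut_factors c (f : 'M[rat]_n) :
  nilpotency_class br c -> is_lie_automorphism br f ->
  exists ps, size ps = c /\ monic_factor_seq (char_poly f) ps.
Proof.
move=> nil_c [_ f_hom]; have [V HV] := lcs_mx.
have decV i : (V i.+1 <= V i)%MS.
  apply/row_subP => j; apply/HV; apply: (@lcs_pred i.+2) => //.
  exact/HV/row_sub.
apply: (stable_flag_factors (V := V)) => // [|i|i lt_ic].
- by rewrite -sub1mx; apply/row_subP => i; apply/HV/lcs_top.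
- apply/row_subP => j; rewrite row_mul; apply/HV/lcs_aut => //.
  exact/HV/row_sub.
- have [x [gamma_x not_gamma_x]] := lcs_strict nil_c lt_ic.
  have : (V i.+1 < V i)%MS.
    rewrite ltmxE decV /=; apply/negP => sub; apply/not_gamma_x/HV.
    exact: submx_trans (proj2 (HV i x) gamma_x) sub.
  by rewrite ltmxErank => /andP [].
Qed.

End LowerCentralSeries.

Lemma prod_eq1_has_lt1_gt1 (R : numDomainType) (xs : seq R) : (0 < size xs)%N ->
  {in xs, forall x, 0 <= x} -> {in xs, forall x, x != 1} ->
  \prod_(x <- xs) x = 1 -> has (fun x => x < 1) xs && has (fun x => 1 < x) xs.
Proof.
case: xs => [//|x0 xs] _ ge0 neq1; rewrite big_cons => prod1.
have x0_in : x0 \in x0 :: xs := mem_head _ _.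
have in_xs y : y \in xs -> y \in x0 :: xs by move=> yxs; rewrite inE yxs orbT.
have side y : y \in x0 :: xs -> (y < 1) || (1 < y).
  by move=> y_in; rewrite -real_neqr_lt ?real1 ?ger0_real ?ge0 ?neq1.
apply/andP; split; apply: contraT; rewrite -all_predC => /allP /= not_side.
- have gt1 y : y \in x0 :: xs -> 1 < y.
    by move=> y_in; have := side y y_in; rewrite (negbTE (not_side y y_in)).
  have prod_ge1 : 1 <= \prod_(y <- xs) y.
    rewrite big_seq; apply: (big_ind (fun z => 1 <= z)) => // [a b|y yxs].
      exact: mulr_ege1.
    exact/ltW/gt1/in_xs.
  have := ler_peMr (ge0 _ x0_in) prod_ge1; rewrite prod1.
  by move=> /(lt_le_trans (gt1 _ x0_in)); rewrite ltxx.
- have lt1 y : y \in x0 :: xs -> y < 1.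
    by move=> y_in; have := side y y_in; rewrite (negbTE (not_side y y_in)) orbF.
  have prod_le1 : \prod_(y <- xs) y <= 1.
    by rewrite big_seq prodr_ile1 // => y yxs; rewrite ge0 ?ltW ?lt1 ?in_xs.
  have := ler_piMr (ge0 _ x0_in) prod_le1; rewrite prod1.
  by move=> /le_lt_trans /(_ (lt1 _ x0_in)); rewrite ltxx.
Qed.

Local Notation pQtoC := (map_poly (ratr : rat -> algC)).

Lemma monic_splits (p : {poly algC}) : p \is monic ->
  exists zs, p = \prod_(z <- zs) ('X - z%:P).
Proof.
move=> mon_p; have [zs Ezs] := closed_field_poly_normal p.
by exists zs; rewrite {1}Ezs (monicP mon_p) scale1r.
Qed.

Lemma coef0_prod_XsubC (zs : seq algC) :
  (\prod_(z <- zs) ('X - z%:P))`_0 = \prod_(z <- zs) - z.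
Proof.
rewrite -horner_coef0 horner_prod; apply: eq_bigr => z _.
by rewrite hornerXsubC sub0r.
Qed.

(* A monic rational divisor p of a monic integral polynomial chi has an
   integral constant coefficient: it is, up to sign, a product of roots of chi,
   hence a rational algebraic integer. *)
Lemma monic_divisor_coef0_int (chi p : {poly rat}) : chi \is monic ->
  (forall i, chi`_i \is a Num.int) -> p \is monic -> p %| chi ->
  p`_0 \is a Num.int.
Proof.
move=> mon_chi int_chi mon_p p_dvd.
have [zs Ezs] : exists zs, pQtoC p = \prod_(z <- zs) ('X - z%:P).
  by apply: monic_splits; rewrite map_monic.
have Aint_zs z : z \in zs -> z \in Aint.
  move=> z_in; apply: (@root_monic_Aint (pQtoC chi)).
  - apply: root_dvdp (_ : root (pQtoC p) z); first by rewrite dvdp_map.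
    by rewrite Ezs root_prod_XsubC.
  - by rewrite map_monic.
  apply/polyOverP => i; rewrite coef_map /=.
  by have /intrP [m ->] := int_chi i; rewrite rmorph_int intr_int.
rewrite -Cint_rat; apply: Cint_rat_Aint; first exact: Crat_rat.
rewrite -coef_map Ezs coef0_prod_XsubC big_seq.
by apply: rpred_prod => z z_in; rewrite rpredN Aint_zs.
Qed.

(* If moreover chi(0) = +-1, then p(0) = +-1, since p(0) * (chi/p)(0) = chi(0)
   is a product of two nonzero integers. *)
Lemma monic_divisor_coef0_unit (chi p : {poly rat}) : chi \is monic ->
  (forall i, chi`_i \is a Num.int) -> `|chi`_0| = 1 ->
  p \is monic -> p %| chi -> `|p`_0| = 1.
Proof.
move=> mon_chi int_chi chi0 mon_p p_dvd.
set q := chi %/ p; have Echi : chi = q * p by rewrite divpK.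
have mon_q : q \is monic by move: mon_chi; rewrite Echi monicMr.
have q_dvd : q %| chi by rewrite Echi dvdp_mulIl.
have prod1 : `|q`_0| * `|p`_0| = 1 by rewrite -normrM -coef0M -Echi.
have p0_neq0 : p`_0 != 0.
  apply/eqP => p0; move: prod1; rewrite p0 normr0 mulr0 => /eqP.
  by rewrite eq_sym oner_eq0.
have q0_neq0 : q`_0 != 0.
  apply/eqP => q0; move: prod1; rewrite q0 normr0 mul0r => /eqP.
  by rewrite eq_sym oner_eq0.
apply/le_anti; rewrite norm_intr_ge1 ?(monic_divisor_coef0_int mon_chi) // andbT.
by rewrite -prod1 ler_peMl // norm_intr_ge1 ?(monic_divisor_coef0_int mon_chi).
Qed.

Lemma factor_has_lt1_gt1 (p : {poly rat}) (zs : seq algC) : (1 < size p)%N ->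
  `|p`_0| = 1 -> pQtoC p = \prod_(z <- zs) ('X - z%:P) ->
  {in zs, forall z, `|z| != 1} ->
  has (fun z : algC => `|z| < 1)%R zs && has (fun z : algC => 1 < `|z|)%R zs.
Proof.
move=> size_p p0 Ezs off_circle.
have zs_nil : zs != [::].
  apply: contraTneq size_p => zs0.
  rewrite -(size_map_poly (ratr : {rmorphism rat -> algC})) Ezs zs0.
  by rewrite big_nil size_poly1.
rewrite -(has_map Num.norm (fun x => x < 1)) -(has_map Num.norm (fun x => 1 < x)).
apply: prod_eq1_has_lt1_gt1.
- by rewrite size_map lt0n size_eq0.
- by move=> _ /mapP [z _ ->]; exact: normr_ge0.
- by move=> _ /mapP [z z_in ->]; exact: off_circle.
rewrite big_map -(eq_bigr _ (fun z _ => normrN z)) -normr_prod.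
by rewrite -coef0_prod_XsubC -Ezs coef_map /= -ratr_norm p0 rmorph1.
Qed.

Lemma count_factor_roots (P : pred algC) (chi : {poly rat}) (ps : seq {poly rat})
  (rs : seq algC) : chi \is monic -> all (fun q => q \is monic) ps ->
  \prod_(q <- ps) q %| chi -> pQtoC chi = \prod_(z <- rs) ('X - z%:P) ->
  (forall q zs, q \in ps -> pQtoC q = \prod_(z <- zs) ('X - z%:P) -> has P zs) ->
  (size ps <= count P rs)%N.
Proof.
elim: ps chi rs => [//|p ps IH] chi rs mon_chi /= /andP [mon_p mon_ps] ps_dvd Ers
  factor_has.
case/dvdpP: ps_dvd => r Er; rewrite big_cons in Er.
set chi' := r * \prod_(q <- ps) q.
have Echi : chi = p * chi' by rewrite Er /chi' mulrCA.
have mon_chi' : chi' \is monic by move: mon_chi; rewrite Echi monicMl.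
have [zs Ezs] : exists zs, pQtoC p = \prod_(z <- zs) ('X - z%:P).
  by apply: monic_splits; rewrite map_monic.
have [rs' Ers'] : exists rs', pQtoC chi' = \prod_(z <- rs') ('X - z%:P).
  by apply: monic_splits; rewrite map_monic.
have perm_rs : perm_eq rs (zs ++ rs').
  by apply: prod_XsubC_eq; rewrite big_cat -Ezs -Ers' -Ers Echi rmorphM.
rewrite (permP perm_rs) count_cat -add1n leq_add //.
  by rewrite -has_count (factor_has p zs (mem_head _ _) Ezs).
apply: (IH chi' rs') => //; first exact: dvdp_mulIr.
by move=> q zs' q_in; apply: factor_has; rewrite inE q_in orbT.
Qed.

Lemma anosov_factor_count (chi : {poly rat}) (ps : seq {poly rat}) (rs : seq algC) :
  chi \is monic -> (forall i, chi`_i \is a Num.int) -> `|chi`_0| = 1 ->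
  (forall z, root (pQtoC chi) z -> `|z| != 1) -> monic_factor_seq chi ps ->
  pQtoC chi = \prod_(z <- rs) ('X - z%:P) ->
  (size ps <= count (fun z : algC => `|z| < 1)%R rs)%N /\
  (size ps <= count (fun z : algC => 1 < `|z|)%R rs)%N.
Proof.
move=> mon_chi int_chi chi0 hyperbolic_chi [mon_ps nconst_ps ps_dvd] Ers.
have q_dvd q : q \in ps -> q %| chi.
  by move=> q_in; apply: dvdp_trans ps_dvd; rewrite (big_rem q) //= dvdp_mulIl.
have factor_split q zs : q \in ps -> pQtoC q = \prod_(z <- zs) ('X - z%:P) ->
    has (fun z : algC => `|z| < 1)%R zs && has (fun z : algC => 1 < `|z|)%R zs.
  move=> q_in Ezs; have off_circle : {in zs, forall z, `|z| != 1}.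
    move=> z z_in; apply: hyperbolic_chi; apply: root_dvdp (_ : root (pQtoC q) z).
      by rewrite dvdp_map q_dvd.
    by rewrite Ezs root_prod_XsubC.
  apply: factor_has_lt1_gt1 Ezs off_circle; first exact: (allP nconst_ps).
  apply: (monic_divisor_coef0_unit mon_chi int_chi chi0); last exact: q_dvd.
  exact: (allP mon_ps).
by split; apply: (count_factor_roots mon_chi) => // q zs q_in
  /(factor_split q zs q_in) /andP [].
Qed.

Lemma char_poly_coef0_unit n (f : 'M[rat]_n) : \det f = 1 \/ \det f = -1 ->
  `|(char_poly f)`_0| = 1.
Proof.
rewrite char_poly_det normrM normrX normrN1 expr1n mul1r.
by case=> ->; rewrite ?normrN normr1.
Qed.

Unset Implicit Arguments. Set Strict Implicit.
Theorem mainTheorem10 (n : nat) (br : 'rV[rat]_n -> 'rV[rat]_n -> 'rV[rat]_n)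
  (c : nat) (f : 'M[rat]_n) :
  is_lie_bracket br -> nilpotency_class br c ->
  is_lie_automorphism br f -> anosov f ->
  forall rs : seq algC, char_polyC f = \prod_(z <- rs) ('X - z%:P) ->
  (c <= count (fun z : algC => (`|z| < 1)%R) rs)%N /\
  (c <= count (fun z : algC => (1 < `|z|)%R) rs)%N.
Proof.
move=> _ nil_c aut [hyperbolic_f [int_chi det_f]] rs Ers.
have [ps [<- factors]] := nilpotent_aut_factors nil_c aut.
have EchiC : char_polyC f = pQtoC (char_poly f) by rewrite /char_polyC map_char_poly.
apply: (anosov_factor_count (char_poly_monic f) int_chi
  (char_poly_coef0_unit det_f) _ factors).
- by move=> z; rewrite -EchiC; exact: hyperbolic_f.
- by rewrite -EchiC.
Qed.
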